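(* Let $n \geq 3$. Then $$\max_{G} T_{\min}(G) = 2n-4 \qquad\text{and}\qquad \max_{G} T_{\max}(G) = \left\lfloor n^2/2 \right\rfloor - 1,$$ where both maxima range over all connected, undirected (simple) graphs $G$ on $n$ vertices.
   Context: Let $G=(V,E)$ be a connected undirected graph with $|V| = n$. An ordering is a bijection $\pi: V \to \{1,\dots,n\}$. For vertices $u,v$, let $d_G(u,v)$ denote the length (number of edges) of a shortest path from $u$ to $v$ in $G$. The communication time of ordering $\pi$ on $G$ is $$T(G,\pi) = \sum_{i=1}^{n-1} d_G\big(\pi^{-1}(i), \pi^{-1}(i+1)\big).$$ Define $T_{\min}(G) = \min_{\pi} T(G,\pi)$ and $T_{\max}(G) = \max_{\pi} T(G,\pi)$, the minimum and maximum over all orderings $\pi$. *)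

From mathcomp Require Import all_boot all_fingroup.
Set Implicit Arguments. Unset Strict Implicit. Unset Printing Implicit Defensive.

Definition simple_graph (T : finType) (e : rel T) : Prop :=
  symmetric e /\ irreflexive e.

Definition connected_graph (T : finType) (e : rel T) : Prop :=
  forall u v : T, connect e u v.

Definition walk_of_length (T : finType) (e : rel T) (u v : T) (k : nat) : bool :=
  [exists p : k.-tuple T, path e u p && (last u p == v)].

(* In a graph on #|T| vertices any reachable vertex is at
   distance < #|T|, so minimizing over k < #|T| suffices; the default
   value #|T| is only returned for unreachable pairs (never the case in
   a connected graph). *)
Definition dist (T : finType) (e : rel T) (u v : T) : nat :=
  \big[minn/#|T|]_(k < #|T| | walk_of_length e u v k) k.

(* An ordering is given by a
   permutation s of the vertices: s i is the vertex in position i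
   (so s = pi^-1). *)
Definition comm_time (T : finType) (e : rel T) (s : {perm T}) : nat :=
  let l := [seq s x | x <- enum T] in
  \sum_(p <- zip l (behead l)) dist e p.1 p.2.

Definition Tmax (T : finType) (e : rel T) : nat :=
  \max_(s : {perm T}) comm_time e s.

(* T_min(G): minimum over all orderings (the neutral element Tmax e
   is itself >= every communication time, so it does not affect the
   minimum over the nonempty set of permutations). *)
Definition Tmin (T : finType) (e : rel T) : nat :=
  \big[minn/Tmax e]_(s : {perm T}) comm_time e s.

From mathcomp Require Import all_boot all_order all_fingroup zify.
Set Implicit Arguments. Unset Strict Implicit. Unset Printing Implicit Defensive.
Import Order.TTheory.

(* For T_min, grow an ordering greedily: start from a path u - v - w (cost 2) and
   repeatedly insert a vertex outside the ordering right after one of its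
   neighbours in it; by the triangle inequality through that neighbour each
   insertion costs at most 2, so some ordering costs at most 2n - 4.  In the star,
   two consecutive leaves are at distance 2 and the centre can shorten at most two
   steps, so every ordering costs at least 2n - 4.

   For T_max, route every step of an ordering through a median c, i.e. a vertex
   minimising the transmission W(c) = sum_v d(c, v): this bounds every ordering
   by 2 W(c) - 1.  Minimality of W(c) means that for every neighbour u of c at
   most n/2 vertices are closer to u than to c.  Let N_k count the vertices at
   distance >= k from c.  If some layer at distance j, 0 < j < k, is a single
   vertex w, the neighbour u of c on a geodesic to w is closer than c to all
   N_k far vertices and to a vertex of each layer 1, ..., k - 1, so
   2 (N_k + k - 1) <= n; otherwise all these layers have two vertices and
   N_k + 2k - 1 <= n.  Either way N_k = 0 or N_k <= n + 1 - 2k, and summing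
   W(c) = sum_(k >= 1) N_k gives 4 W(c) <= n^2.  On the path, the
   ordering n/2, 0, n-1, 1, n-2, 2, ... has steps n/2, n-1, n-2, ..., 2, which add
   up to floor(n^2/2) - 1. *)

Section Walks.
Variables (T : finType) (e : rel T).

Lemma walk0 u v : walk_of_length e u v 0 = (u == v).
Proof.
apply/existsP/eqP => [[p /andP[_]]|->]; first by rewrite tuple0 => /eqP.
by exists [tuple]; rewrite /= eqxx.
Qed.

Lemma walkS u v k :
  walk_of_length e u v k.+1 = [exists w, e u w && walk_of_length e w v k].
Proof.
apply/existsP/existsP => [[p]|[w /andP[euw /existsP[p /andP[pp lp]]]]].
  case/tupleP: p => w p /= /andP[/andP[euw pp] lp].
  by exists w; rewrite euw; apply/existsP; exists p; rewrite pp.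
by exists [tuple of w :: p]; rewrite /= euw pp.
Qed.

Lemma walk1 u v : walk_of_length e u v 1 = e u v.
Proof.
rewrite walkS; apply/existsP/idP => [[w /andP[euw]]|euv].
  by rewrite walk0 => /eqP<-.
by exists v; rewrite euv walk0 eqxx.
Qed.

Lemma walk_cat a b u v w :
  walk_of_length e u v a -> walk_of_length e v w b ->
  walk_of_length e u w (a + b).
Proof.
elim: a u => [|a IHa] u; first by rewrite walk0 => /eqP->.
rewrite walkS addSn walkS => /existsP[x /andP[eux wx]] wb.
by apply/existsP; exists x; rewrite eux (IHa _ wx wb).
Qed.

Lemma walk_split a b u w :
  walk_of_length e u w (a + b) ->
  exists2 v, walk_of_length e u v a & walk_of_length e v w b.
Proof.
elim: a u => [|a IHa] u; first by exists u; rewrite ?walk0.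
rewrite addSn walkS => /existsP[x /andP[eux /IHa[v wxv wvw]]].
by exists v => //; rewrite walkS; apply/existsP; exists x; rewrite eux.
Qed.

Hypothesis sym_e : symmetric e.

Lemma walk_rev k u v : walk_of_length e u v k -> walk_of_length e v u k.
Proof.
elim: k u => [|k IHk] u; first by rewrite !walk0 eq_sym.
rewrite walkS => /existsP[w /andP[euw /IHk wk]].
by rewrite -addn1; apply: walk_cat wk _; rewrite walk1 sym_e.
Qed.

Lemma connect_walk u v :
  connect e u v -> exists2 k, k < #|T| & walk_of_length e u v k.
Proof.
case/connectP=> p pp ->; case: (shortenP pp) => q qq uq _.
exists (size q); last by apply/existsP; exists (in_tuple q); rewrite /= qq eqxx.
by rewrite -ltnS -[(size q).+1]/(size (u :: q)) -(card_uniqP uq) ltnS max_card.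
Qed.

Local Notation d := (dist e).

Lemma dist_min u v k : walk_of_length e u v k -> d u v <= k.
Proof.
move=> wk; rewrite /dist -minEnat -leEnat.
have [lk|kT] := ltnP k #|T|; first exact: (@bigmin_le_cond _ _ _ _ (Ordinal lk) _ _ wk).
by rewrite (le_trans (bigmin_le_id _ _ _ _)) ?leEnat.
Qed.

Lemma distnn u : d u u = 0.
Proof. by apply/eqP; rewrite -leqn0 dist_min // walk0. Qed.

Lemma dist_le1 u v : e u v -> d u v <= 1.
Proof. by move=> euv; apply: dist_min; rewrite walk1. Qed.

Hypothesis conn : connected_graph e.

Lemma dist_walk u v : walk_of_length e u v (d u v) /\ d u v < #|T|.
Proof.
have [k lk wk] := connect_walk (conn u v).
have [i wi ->] : {i : 'I_#|T| | walk_of_length e u v i & d u v = i}.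
  rewrite /dist -minEnat; apply: (eq_bigmin (Ordinal lk)) => // i _.
  by rewrite leEnat ltnW.
by rewrite wi ltn_ord.
Qed.

Lemma dist_ltn_card u v : d u v < #|T|.
Proof. exact: (dist_walk u v).2. Qed.

Lemma dist_eq0 u v : (d u v == 0) = (u == v).
Proof.
apply/eqP/eqP => [duv|->]; last exact: distnn.
by have [] := dist_walk u v; rewrite duv walk0 => /eqP.
Qed.

Lemma dist_triangle u v w : d u w <= d u v + d v w.
Proof. by apply/dist_min/walk_cat; apply: (dist_walk _ _).1. Qed.

Lemma dist_geodesic u w j : j <= d u w ->
  exists v, d u v = j /\ d v w = d u w - j.
Proof.
move=> le_j; have [] := dist_walk u w; rewrite -(subnKC le_j).
case/walk_split=> v /dist_min uv /dist_min vw _; exists v.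
by have := dist_triangle u v w; lia.
Qed.

Lemma dist_next u w k : d u w = k.+1 -> exists v, e u v /\ d v w = k.
Proof.
move=> duw; have [] := dist_walk u w; rewrite duw walkS.
case/existsP=> v /andP[euv /dist_min vw] _; exists v; split=> //.
by have := dist_triangle u v w; have := dist_le1 euv; lia.
Qed.

Lemma distC u v : d u v = d v u.
Proof.
by apply/eqP; rewrite eqn_leq !dist_min // walk_rev //; apply: (dist_walk _ _).1.
Qed.

End Walks.

Section Cost.
Variables (T : finType) (e : rel T).
Local Notation d := (dist e).

Definition cost (s : seq T) : nat := \sum_(p <- zip s (behead s)) d p.1 p.2.

Lemma comm_timeE (s : {perm T}) : comm_time e s = cost [seq s x | x <- enum T].
Proof. by []. Qed.

Lemma cost_cons x s : cost (x :: s) = d x (head x s) + cost s.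
Proof. by case: s => [|y s]; rewrite /cost ?big_cons // big_nil distnn. Qed.

Lemma cost1 x : cost [:: x] = 0.
Proof. by rewrite /cost big_nil. Qed.

Lemma cost_map_iota (f : nat -> T) a k :
  cost [seq f i | i <- iota a k.+1] = \sum_(i < k) d (f (a + i)) (f (a + i).+1).
Proof.
elim: k a => [|k IHk] a; first by rewrite cost1 big_ord0.
rewrite -[iota a _]/(a :: iota a.+1 k.+1) map_cons cost_cons IHk big_ord_recl addn0.
by congr (_ + _); apply: eq_bigr => i _; rewrite /bump /= addSnnS.
Qed.

Lemma exists_notin (s : seq T) : size s < #|T| -> exists v, v \notin s.
Proof.
move=> small; apply/existsP; rewrite -negb_forall.
apply: contraTN small => /forallP s_full.
by rewrite -leqNgt (leq_trans _ (card_size s)) // subset_leq_card //; apply/subsetP.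
Qed.

Hypothesis conn : connected_graph e.

Lemma exists_crossing (s : seq T) a : a \in s -> size s < #|T| ->
  exists u v, [/\ u \in s, v \notin s & e u v].
Proof.
move=> sa /exists_notin[b sb]; have /connectP[p pp lp] := conn a b.
elim: p a sa pp lp => [|y p IHp] x sx /=; first by move=> _ lb; move: sb; rewrite lb sx.
case/andP=> exy pp lp; have [sy|sy] := boolP (y \in s); first exact: IHp sy pp lp.
by exists x, y.
Qed.

Hypothesis sym_e : symmetric e.

Lemma cost_insert u v s1 s2 : e u v ->
  cost (s1 ++ u :: v :: s2) <= cost (s1 ++ u :: s2) + 2.
Proof.
move=> euv; have duv := dist_le1 euv; elim: s1 => [|x s1 IHs1] /=.
  rewrite !cost_cons /=; case: s2 => [|y s2] /=; first by rewrite distnn; lia.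
  by have := dist_triangle conn v u y; rewrite (distC sym_e conn v u); lia.
rewrite !cost_cons -addnA.
have -> : head x (s1 ++ u :: v :: s2) = head x (s1 ++ u :: s2) by case: s1 {IHs1}.
by rewrite leq_add2l.
Qed.

Lemma extend_order s : s != [::] -> uniq s -> size s < #|T| ->
  exists s', [/\ uniq s', size s' = (size s).+1 & cost s' <= cost s + 2].
Proof.
case: s => // a s0 _ uniq_s small.
have [u [v [su sv euv]]] := exists_crossing (mem_head a s0) small.
move: uniq_s sv small; case/splitPr: su => s1 s2 uniq_s sv _.
exists (s1 ++ u :: v :: s2); split; last exact: cost_insert.
- have: perm_eq (s1 ++ u :: v :: s2) (v :: s1 ++ u :: s2).
    by apply/seq.permP => p; rewrite /= !count_cat /= (addnCA (p u)) addnCA.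
  by move/perm_uniq->; rewrite /= sv uniq_s.
- by rewrite !size_cat /= addnS.
Qed.

Lemma path3_order : 2 < #|T| -> exists s, [/\ uniq s, size s = 3 & cost s <= 2].
Proof.
move=> T3; have [a _] := card_gt0P (ltnW (ltnW T3)).
have [u [b [ua ba eub]]] := exists_crossing (mem_head a [::]) (ltnW T3).
move: ua ba eub; rewrite !inE => /eqP-> ba /dist_le1 dab.
have [w [c [wab cab ewc]]] := exists_crossing (mem_head a [:: b]) T3.
move: wab cab ewc; rewrite !inE !negb_or => /orP[]/eqP-> /andP[ca cb] /dist_le1 dwc.
- exists [:: b; a; c]; rewrite /= !inE !negb_or !(eq_sym a) (eq_sym b c) ba ca cb.
  by split=> //; rewrite 2!cost_cons cost1 distC //=; lia.
- exists [:: a; b; c]; rewrite /= !inE !negb_or !(eq_sym a) (eq_sym b c) ba ca cb.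
  by split=> //; rewrite 2!cost_cons cost1 /=; lia.
Qed.

Lemma greedy_order k : 3 <= k <= #|T| ->
  exists s, [/\ uniq s, size s = k & cost s <= 2 * k - 4].
Proof.
elim: k => // k IHk /andP[]; rewrite leq_eqVlt => /orP[/eqP<- T3|k3 small].
  exact: path3_order.
have [|s [uniq_s size_s cost_s]] := IHk; first by rewrite -ltnS k3 ltnW.
subst k; have s_nil : s != [::] by case: s k3 {IHk uniq_s cost_s small}.
have [s' [uniq_s' size_s' cost_s']] := extend_order s_nil uniq_s small.
by exists s'; split=> //; lia.
Qed.

End Cost.

Lemma perm_of_uniq (T : finType) (x0 : T) (s : seq T) :
  uniq s -> size s = #|T| -> exists p : {perm T}, [seq p x | x <- enum T] = s.
Proof.
move=> uniq_s size_s.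
have inj : injective (fun x : T => nth x0 s (enum_rank x)).
  move=> x y eq_nth; apply: enum_rank_inj; apply/val_inj/eqP.
  by rewrite -(nth_uniq x0 _ _ uniq_s) ?size_s ?eq_nth ?eqxx ?ltn_ord.
exists (perm inj); apply: (@eq_from_nth _ x0).
  by rewrite size_map size_s cardE.
rewrite size_map -cardE => i lt_i.
rewrite (nth_map x0) -?cardE // permE.
have -> : nth x0 (enum T) i = enum_val (Ordinal lt_i).
  by apply: set_nth_default; rewrite -cardE.
by rewrite enum_valK.
Qed.

Section OrderingExtrema.
Variables (T : finType) (e : rel T).

Lemma Tmin_le (s : {perm T}) : Tmin e <= comm_time e s.
Proof. by have := bigmin_le (Tmax e) s (comm_time e); rewrite minEnat leEnat. Qed.

Lemma Tmin_ge m : (forall s : {perm T}, m <= comm_time e s) -> m <= Tmin e.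
Proof.
move=> m_le; rewrite /Tmin -minEnat -leEnat; apply/bigmin_geP; split=> [|s _].
  by rewrite leEnat (leq_trans (m_le 1%g)) ?leq_bigmax.
by rewrite leEnat m_le.
Qed.

Lemma Tmax_ge (s : {perm T}) : comm_time e s <= Tmax e.
Proof. exact: leq_bigmax. Qed.

End OrderingExtrema.

Theorem Tmin_upper (T : finType) (e : rel T) :
  simple_graph e -> connected_graph e -> 2 < #|T| -> Tmin e <= 2 * #|T| - 4.
Proof.
move=> [sym_e _] conn T3; have [x0 _] := card_gt0P (ltnW (ltnW T3)).
have [|s [uniq_s size_s cost_s]] := @greedy_order T e conn sym_e #|T|.
  by rewrite T3 leqnn.
have [p ord_p] := perm_of_uniq x0 uniq_s size_s.
by apply: leq_trans (Tmin_le e p) _; rewrite comm_timeE ord_p.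
Qed.

Section Star.
Variables (T : finType) (c : T).

Definition star : rel T := fun x y => (x == c) (+) (y == c).

Lemma star_simple : simple_graph star.
Proof. by split=> [x y|x]; rewrite /star ?addbb // addbC. Qed.

Lemma star_connected : connected_graph star.
Proof.
have to_c x : connect star x c.
  by have [->|xc] := eqVneq x c; last by apply: connect1; rewrite /star eqxx addbT.
move=> x y; apply: connect_trans (to_c x) _.
by rewrite (sym_connect_sym star_simple.1).
Qed.

Lemma star_dist x y : x != y -> 2 <= dist star x y + (x == c) + (y == c).
Proof.
move=> xy; have [] := dist_walk star_connected x y.
case: (dist star x y) => [|[|k]] walk_xy _; last by rewrite !addSn.
  by move: walk_xy; rewrite walk0 (negbTE xy).
by move: walk_xy; rewrite walk1 /star; case: (x == c); case: (y == c).
Qed.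

Lemma star_cost y s : uniq (y :: s) ->
  2 * size s + (y == c) <= cost star (y :: s) + 2 * count_mem c (y :: s).
Proof.
elim: s y => [|z s IHs] y; first by rewrite cost1 /= addn0; case: (y == c).
rewrite /= inE negb_or => /andP[/andP[yz _] uniq_zs].
have := IHs z uniq_zs; have := star_dist yz; rewrite cost_cons /=.
by case: (y == c); case: (z == c) => /=; lia.
Qed.

Lemma star_Tmin : 2 < #|T| -> Tmin star = 2 * #|T| - 4.
Proof.
move=> T3; apply/eqP; rewrite eqn_leq (Tmin_upper star_simple star_connected T3) /=.
apply: Tmin_ge => p; rewrite comm_timeE.
have : uniq [seq p x | x <- enum T].
  by rewrite map_inj_uniq ?enum_uniq //; apply: perm_inj.
have : size [seq p x | x <- enum T] = #|T| by rewrite size_map -cardE.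
case: [seq p x | x <- enum T] => [size0|y s size_ys uniq_ys].
  by rewrite -size0 in T3.
have := star_cost uniq_ys; rewrite (count_uniq_mem c uniq_ys) -size_ys /=.
by case: (c \in y :: s); case: (y == c) => /=; lia.
Qed.

End Star.

Lemma sum_ord_ltn m N : \sum_(k < N) (k < m) = minn m N.
Proof.
elim: N => [|N IHN]; first by rewrite big_ord0 minn0.
by rewrite big_ord_recr /= IHN; case: ltnP; lia.
Qed.

Lemma sum_sub2_le_sqr m N : 4 * \sum_(k < N) (m - 2 * k) <= (m + 1) ^ 2.
Proof.
elim: N m => [|N IHN] m; first by rewrite big_ord0.
rewrite big_ord_recl /=.
under eq_bigr => i _ do rewrite /bump /= add1n mulnS subnDA.
have := IHN (m - 2); move: (\sum_(i < N) _) => S.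
by rewrite !expnS !expn0 !muln1; nia.
Qed.

Lemma sum_subn_ord c m : m <= c.+1 -> 2 * \sum_(i < m) (c - i) = m * (2 * c + 1 - m).
Proof.
elim: m => [|m IHm] lt_m; first by rewrite big_ord0.
by rewrite big_ord_recr /= mulnDr IHm; nia.
Qed.

Section Transmission.
Variables (T : finType) (e : rel T).
Hypothesis sym_e : symmetric e.
Hypothesis conn : connected_graph e.
Local Notation d := (dist e).

Definition transmission c := \sum_v d c v.

Lemma cost_transmission c x s :
  cost e (x :: s) + d c x + d c (last x s) <= 2 * \sum_(v <- x :: s) d c v.
Proof.
elim: s x => [|y s IHs] x; first by rewrite cost1 big_seq1 /=; lia.
rewrite cost_cons big_cons /=; have := IHs y; rewrite big_cons.
by have := dist_triangle conn x c y; rewrite (distC sym_e conn x c); lia.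
Qed.

Lemma cost_transmission_uniq c s : uniq s -> 1 < size s ->
  cost e s + 1 <= 2 * \sum_(v <- s) d c v.
Proof.
case: s => [//|x [//|y s]] uniq_s _; have := cost_transmission c x (y :: s) => /=.
have x_last : x != last y s by apply: contraTneq uniq_s => ->; rewrite /= mem_last.
have : 0 < d c x + d c (last y s).
  rewrite addn_gt0 !lt0n !dist_eq0 //; apply: contraNT x_last.
  by rewrite negb_or !negbK => /andP[/eqP <- /eqP <-].
by move=> ends; apply: leq_trans; rewrite -addnA leq_add2l.
Qed.

Lemma comm_time_transmission (p : {perm T}) c : 1 < #|T| ->
  comm_time e p + 1 <= 2 * transmission c.
Proof.
have uniq_p : uniq [seq p x | x <- enum T].
  by rewrite map_inj_uniq ?enum_uniq //; apply: perm_inj.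
move=> T2; rewrite /transmission (perm_big [seq p x | x <- enum T]) /=.
  by rewrite comm_timeE cost_transmission_uniq // size_map -cardE.
apply: uniq_perm; rewrite ?index_enum_uniq // => v; rewrite mem_index_enum; symmetry.
by apply/mapP; exists (p^-1 v)%g; rewrite ?mem_enum ?permKV.
Qed.

Definition layer c i := [set v | d c v == i].
Definition beyond c k := [set v | k <= d c v].

Lemma card_layers c (X : {set T}) k :
  #|X| = \sum_(i < k) #|X :&: layer c i| + #|X :&: beyond c k|.
Proof.
elim: k => [|k IHk].
  by rewrite big_ord0; apply: eq_card => v; rewrite !inE andbT.
rewrite big_ord_recr /= IHk -addnA -(cardsID (layer c k) (X :&: beyond c k)).
congr (_ + (_ + _)); apply: eq_card => v; rewrite !inE.
  by case: ltngtP; rewrite ?andbT ?andbF.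
by case: ltngtP; rewrite ?andbT ?andbF.
Qed.

Lemma transmission_beyond c : transmission c = \sum_(k < #|T|) #|beyond c k.+1|.
Proof.
have card_beyond k : #|beyond c k.+1| = \sum_v (k < d c v).
  by rewrite -sum1_card big_mkcond; apply: eq_bigr => v _; rewrite inE.
under eq_bigr do rewrite card_beyond; rewrite exchange_big; apply: eq_bigr => v _.
by rewrite sum_ord_ltn; symmetry; apply/minn_idPl/ltnW/dist_ltn_card.
Qed.

Section Median.
Variable c : T.
Lemma beyond_thick k : 0 < k -> (forall i, 0 < i < k -> 1 < #|layer c i|) ->
  #|beyond c k| + 2 * k <= #|T| + 1.
Proof.
case: k => // k _ thick; have := card_layers c [set: T] k.+1.
under eq_bigr do rewrite setTI; rewrite cardsT setTI big_ord_recl.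
have : 0 < #|layer c (@ord0 k)| by apply/card_gt0P; exists c; rewrite inE distnn.
have : \sum_(i < k) 2 <= \sum_(i < k) #|layer c (lift ord0 i)|.
  by apply: leq_sum => i _; apply: thick; rewrite /= /bump /= ltnS ltn_ord.
by rewrite big_const_ord iter_addn_0; lia.
Qed.

Lemma closer_beyond u w j : 0 < j -> d c w = j -> d u w = j.-1 ->
  (forall w', d c w' = j -> w' = w) -> forall v, j <= d c v -> d u v < d c v.
Proof.
move=> j0 dcw duw cut v le_j; have [w' [/cut -> dwv]] := dist_geodesic conn le_j.
by have := dist_triangle conn u w v; lia.
Qed.

Lemma geodesic_closer u w j i : e c u -> d c w = j -> d u w = j.-1 -> 0 < i <= j ->
  exists2 r, d c r = i & d u r < i.
Proof.
move=> ecu dcw duw /andP[i0 le_ij].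
have [r [dur drw]] : exists r, d u r = i.-1 /\ d r w = d u w - i.-1.
  by apply: (dist_geodesic conn); rewrite duw; lia.
have := dist_triangle conn c u r; have := dist_triangle conn c r w.
by have := dist_le1 ecu; exists r; lia.
Qed.

Hypothesis median : forall x, transmission c <= transmission x.

Lemma median_closer_half u : e c u -> 2 * #|[set v | d u v < d c v]| <= #|T|.
Proof.
move=> ecu; set A := [set v | d u v < d c v].
have termwise v : d u v + (if v \in A then 2 else 0) <= d c v + 1.
  rewrite inE; have := dist_triangle conn u c v; have := dist_le1 ecu.
  by rewrite distC //; case: ltnP; lia.
have : \sum_v (d u v + (if v \in A then 2 else 0)) <= \sum_v (d c v + 1).
  by apply: leq_sum => v _; apply: termwise.
rewrite !big_split -big_mkcond /= sum_nat_const sum1_card (@eq_card _ xpredT T) //.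
by have := median u; rewrite /transmission; lia.
Qed.

Lemma beyond_thin j k : 0 < j < k -> #|layer c j| <= 1 -> 0 < #|beyond c k| ->
  2 * (#|beyond c k| + k.-1) <= #|T|.
Proof.
case/andP=> j0 jk thin /card_gt0P[v0]; rewrite inE => far_v0.
have [w [dcw _]] := dist_geodesic conn (ltnW (leq_trans jk far_v0)).
have cut w' : d c w' = j -> w' = w.
  by move=> dcw'; apply: (card_le1_eqP thin); rewrite inE ?dcw ?dcw'.
have [u [ecu duw]] : exists u, e c u /\ d u w = j.-1.
  by apply: (dist_next conn); rewrite dcw prednK.
set A := [set v | d u v < d c v].
have closer := closer_beyond j0 dcw duw cut.
have meets i : 0 < i < k -> 0 < #|A :&: layer c i|.
  case/andP=> i0 ik; apply/card_gt0P.
  have [ji|ij] := leqP j i.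
    have [r [dcr _]] := dist_geodesic conn (ltnW (leq_trans ik far_v0)).
    by exists r; rewrite !inE closer dcr ?eqxx.
  have [r dcr ur] : exists2 r, d c r = i & d u r < i.
    by apply: (geodesic_closer ecu dcw duw); rewrite i0 ltnW.
  by exists r; rewrite !inE dcr eqxx andbT.
have := card_layers c A k; rewrite (setIidPr _); last first.
  by apply/subsetP => v; rewrite !inE => /(leq_trans (ltnW jk)) /closer.
have [k' k_eq] : exists k', k = k'.+1 by exists k.-1; lia.
subst k; rewrite big_ord_recl.
have : \sum_(i < k') 1 <= \sum_(i < k') #|A :&: layer c (lift ord0 i)|.
  by apply: leq_sum => i _; apply: meets; rewrite /= /bump /= ltnS ltn_ord.
have half : 2 * #|A| <= #|T| := median_closer_half ecu.
rewrite big_const_ord iter_addn_0; lia.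
Qed.

Lemma beyond_median k : 0 < k ->
  #|beyond c k| = 0 \/ #|beyond c k| + 2 * k <= #|T| + 1.
Proof.
move=> k0; have [/existsP[j /andP[j0 thin]]|thick] :=
  boolP [exists j : 'I_k, (0 < j) && (#|layer c j| <= 1)].
  have [|far] := posnP #|beyond c k|; [left | right] => //.
  by have := beyond_thin (j := j) (k := k); rewrite j0 ltn_ord thin far; lia.
right; apply: beyond_thick => // i /andP[i0 ik]; move: thick.
by rewrite negb_exists => /forallP /(_ (Ordinal ik)); rewrite i0 -ltnNge.
Qed.

Lemma transmission_median : 4 * transmission c <= #|T| ^ 2.
Proof.
have T0 : 0 < #|T| by apply/card_gt0P; exists c.
have : \sum_(k < #|T|) #|beyond c k.+1| <= \sum_(k < #|T|) (#|T| - 1 - 2 * k).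
  by apply: leq_sum => k _; case: (beyond_median (ltn0Sn k)); lia.
have := sum_sub2_le_sqr (#|T| - 1) #|T|; rewrite subnK // transmission_beyond.
lia.
Qed.

End Median.

Lemma median_exists : 0 < #|T| -> exists c, forall x, transmission c <= transmission x.
Proof.
case/card_gt0P=> x0 _; exists [arg min_(x < x0) transmission x].
by case: arg_minnP => // c _ min_c x; apply: min_c.
Qed.

End Transmission.

Theorem Tmax_upper (T : finType) (e : rel T) :
  simple_graph e -> connected_graph e -> 1 < #|T| -> Tmax e <= (#|T| ^ 2)./2 - 1.
Proof.
move=> [sym_e _] conn T2; have [c median] := median_exists e (ltnW T2).
apply/bigmax_leqP => p _; have := transmission_median sym_e conn median.
have := comm_time_transmission sym_e conn p c T2.
rewrite -divn2; lia.
Qed.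

Section PathGraph.
Variable n : nat.

Definition path_graph : rel 'I_n := fun i j => (i.+1 == j) || (j.+1 == i).

Lemma path_graph_simple : simple_graph path_graph.
Proof.
split=> [i j|i]; first by rewrite /path_graph orbC.
by apply/negP => /orP[] /eqP; lia.
Qed.

Lemma path_graph_connected : connected_graph path_graph.
Proof.
have to_0 (lt_0 : 0 < n) i (lt_i : i < n) :
    connect path_graph (Ordinal lt_i) (Ordinal lt_0).
  elim: i lt_i => [|i IHi] lt_i; first by rewrite (bool_irrelevance lt_i lt_0).
  apply: connect_trans (connect1 _) (IHi (ltnW lt_i)).
  by rewrite /path_graph /= eqxx orbT.
move=> [i lt_i] [j lt_j]; have lt_0 := leq_ltn_trans (leq0n i) lt_i.
apply: connect_trans (to_0 lt_0 _ lt_i) _.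
by rewrite (sym_connect_sym path_graph_simple.1).
Qed.

Lemma path_graph_dist (i j : 'I_n) : (i - j) + (j - i) <= dist path_graph i j.
Proof.
have [] := dist_walk path_graph_connected i j; move: (dist _ i j) => k + _.
elim: k i => [|k IHk] i; first by rewrite walk0 => /eqP->; rewrite subnn.
by rewrite walkS => /existsP[h /andP[/orP[] /eqP eq_h /IHk]]; lia.
Qed.

End PathGraph.

Section Zigzag.
Variable n : nat.

Definition zigzag i := if i is j.+1 then (if odd j then n.-1 - j./2 else j./2) else n./2.

Definition zigzag_gap i := if i is j.+1 then n.-1 - j else n./2.

Lemma zigzag_lt i : i < n -> zigzag i < n.
Proof. by case: i => [|j] /=; [|case: ifP]; lia. Qed.

Lemma zigzag_inj i j : i < n -> j < n -> zigzag i = zigzag j -> i = j.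
Proof. case: i => [|i]; case: j => [|j] /=; do ?case: ifP. all: lia. Qed.

Lemma zigzag_step i : i.+1 < n ->
  (zigzag i - zigzag i.+1) + (zigzag i.+1 - zigzag i) = zigzag_gap i.
Proof. by case: i => [|i] /=; [lia | case odd_i: (odd i) => /=; lia]. Qed.

Lemma sum_zigzag_gap : 1 < n -> \sum_(i < n.-1) zigzag_gap i = (n ^ 2)./2 - 1.
Proof.
move=> n2; have -> : n.-1 = n.-2.+1 by lia.
rewrite big_ord_recl.
have -> : \sum_(i < n.-2) zigzag_gap (lift ord0 i) = \sum_(i < n.-2) (n.-1 - i) by [].
have := @sum_subn_ord n.-1 n.-2; rewrite -!divn2 /=; nia.
Qed.

End Zigzag.

Lemma path_graph_Tmax n : 1 < n -> Tmax (@path_graph n) = (n ^ 2)./2 - 1.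
Proof.
case: n => [//|m] m2; apply/eqP; rewrite eqn_leq; apply/andP; split.
  have := Tmax_upper (@path_graph_simple m.+1) (@path_graph_connected m.+1).
  by rewrite card_ord; apply.
pose f i : 'I_m.+1 := inord (zigzag m.+1 i).
have val_f i : i < m.+1 -> f i = zigzag m.+1 i :> nat.
  by move=> lt_i; rewrite inordK ?zigzag_lt.
have uniq_f : uniq [seq f i | i <- iota 0 m.+1].
  rewrite map_inj_in_uniq ?iota_uniq // => i j /[!mem_iota] /= lt_i lt_j.
  by move/(congr1 (@nat_of_ord _)); rewrite !val_f //; apply: zigzag_inj.
have [|p ord_p] := perm_of_uniq ord0 uniq_f; first by rewrite size_map size_iota card_ord.
apply: leq_trans (Tmax_ge _ p).
rewrite comm_timeE ord_p cost_map_iota -(sum_zigzag_gap m2).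
apply: leq_sum => i _; have lt_i : i.+1 < m.+1 := ltn_ord i.
by rewrite -zigzag_step // (leq_trans _ (path_graph_dist _ _)) // !val_f // ltnW.
Qed.

Theorem theorem1 (n : nat) (hn : 3 <= n) :
  ((forall e : rel 'I_n, simple_graph e -> connected_graph e ->
      Tmin e <= 2 * n - 4) /\
   (exists e : rel 'I_n, [/\ simple_graph e, connected_graph e &
      Tmin e = 2 * n - 4])) /\
  ((forall e : rel 'I_n, simple_graph e -> connected_graph e ->
      Tmax e <= (n ^ 2)./2 - 1) /\
   (exists e : rel 'I_n, [/\ simple_graph e, connected_graph e &
      Tmax e = (n ^ 2)./2 - 1])).
Proof.
have n3 : 2 < #|'I_n| by rewrite card_ord.
pose c : 'I_n := Ordinal (ltnW (ltnW hn)).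
split; split.
- by move=> e simple conn; have := Tmin_upper simple conn n3; rewrite card_ord.
- exists (star c); split; [exact: star_simple | exact: star_connected |].
  by rewrite star_Tmin card_ord.
- by move=> e simple conn; have := Tmax_upper simple conn (ltnW n3); rewrite card_ord.
- exists (@path_graph n).
  split; [exact: path_graph_simple | exact: path_graph_connected |].
  by rewrite path_graph_Tmax // ltnW.
Qed.
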